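(* Let $\ell\ge1$, $n\ge2$, $N=n^\ell$, $T=\ell(n-1)$, and consider the EBS connection schedule of order $\ell$. For every physical edge $e$ of its virtual topology, the number of triples $(t,a,b)\in\mathbb Z\times(\mathbb Z/n)^\ell\times(\mathbb Z/n)^\ell$ such that the EBS semi-path from $(a,t)$ to $b$ traverses $e$ is exactly $T\,n^{\ell-1}$.
   Context: The virtual topology of a connection schedule $(\pi_t)_{t\in\mathbb Z}$ (periodic with period $T$) is the directed graph on (nodes)$\times\mathbb Z$ with virtual edges $(i,t)\to(i,t+1)$ and physical edges $(i,t)\to(\pi_t(i),t+1)$. EBS connection schedule of order $\ell$: nodes are $(\mathbb Z/n)^\ell$; $\mathbf e_p$ ($0\le p<\ell$) is the standard basis vector; period $T=\ell(n-1)$; for $0\le p<\ell$, $1\le s\le n-1$, $\pi_{(n-1)p+s-1}(\mathbf i)=\mathbf i+s\mathbf e_p$, and $\pi_t=\pi_{t\bmod T}$. The EBS semi-path from $(a,t)$ to $b$ is built greedily: at the current vertex $(x,t')$, stop if $x=b$; otherwise write $t'\bmod T=(n-1)p+s-1$ and, if $(b-x)_p=s$ in $\mathbb Z/n$, traverse the physical edge to $(x+s\mathbf e_p,t'+1)$, else the virtual edge to $(x,t'+1)$. *)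

From mathcomp Require Import all_boot all_order all_algebra.
Set Implicit Arguments. Unset Strict Implicit. Unset Printing Implicit Defensive.
Import GRing.Theory Num.Theory.
Local Open Scope ring_scope.

Section EBS.
Variables (l n : nat).

(* nodes (Z/n)^l ; 'Z_n is Z/nZ provided n >= 2 (hypothesis of the theorem) *)
Definition node := {ffun 'I_l -> 'Z_n}.

Definition ebasis (p : nat) : node := [ffun q : 'I_l => ((nat_of_ord q == p)%:R : 'Z_n)].

(* p-th coordinate of a vector (0 if p >= l, which never happens in use) *)
Definition coord (v : node) (p : nat) : 'Z_n := odflt 0 (omap v (insub p)).

Definition period : nat := (l * (n - 1))%N.

Definition phase (t : int) : nat := `|(t %% (period%:Z))%Z|%N.

(* writing t mod T = (n-1) p + s - 1 with 1 <= s <= n-1 *)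
Definition blk (t : int) : nat := (phase t %/ (n - 1))%N.
Definition sft (t : int) : nat := ((phase t %% (n - 1)).+1)%N.

Definition pi (t : int) (i : node) : node := i + ebasis (blk t) *+ sft t.

(* the greedy EBS semi-path towards b; a state is a vertex (x, t) *)
Definition goes_physical (b : node) (st : node * int) : bool :=
  (st.1 != b) && (coord (b - st.1) (blk st.2) == (sft st.2)%:R).

Definition ebs_step (b : node) (st : node * int) : node * int :=
  if st.1 == b then st
  else if goes_physical b st then (pi st.2 st.1, (st.2 + 1)%R)
  else (st.1, (st.2 + 1)%R).

(* the EBS semi-path from (a,t) to b traverses the physical edge
   (i,t0) -> (pi_{t0}(i), t0+1) *)
Definition traverses (t : int) (a b : node) (i : node) (t0 : int) : Prop :=
  exists k : nat, iter k (ebs_step b) (a, t) = (i, t0) /\ goes_physical b (i, t0).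

End EBS.

From Pilot Require Import Defs.
From mathcomp Require Import all_boot all_order all_algebra.
From mathcomp Require Import zify.
Set Implicit Arguments. Unset Strict Implicit. Unset Printing Implicit Defensive.
Import GRing.Theory.
Local Open Scope ring_scope.

(* Along the EBS semi-path towards b, the displacement b - x loses exactly
   its p-th coordinate at the first time of block p whose shift equals that
   coordinate, and never changes otherwise.  A semi-path traversing the
   physical edge at (i, t0) is therefore determined by the number k < T of
   steps it took before t0 and by its initial displacement d, which is
   arbitrary except that its coordinate in the block of t0 must equal the
   shift of t0 (the window of length k < T meets that phase only at t0).
   This gives T * n^(l-1) triples. *)

Lemma card_ffun_fixed (I R : finType) (p : I) (c : R) :
  #|[pred f : {ffun I -> R} | f p == c]| = (#|R| ^ #|I|.-1)%N.
Proof.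
pose F := fun x : I => if x == p then pred1 c else predT.
rewrite (eq_card (B := family F)); last first.
  move=> f; rewrite inE; apply/eqP/familyP => [fp x | Ff].
    by rewrite /F; case: eqP => [->|]; rewrite inE ?fp.
  by have := Ff p; rewrite /F eqxx inE => /eqP.
rewrite card_family foldrE big_image (bigD1 p) //= {1}/F eqxx card1 mul1n.
rewrite (eq_bigr (fun _ => #|R|)) => [|x]; last by rewrite /F => /negbTE ->.
by rewrite prod_nat_const cardC1.
Qed.

Lemma ffunBE (I : finType) (V : zmodType) (f g : {ffun I -> V}) x :
  (f - g) x = f x - g x.
Proof. by rewrite !ffunE. Qed.

Lemma subr_eq_self (V : zmodType) (x y : V) : (x - y == x) = (y == 0).
Proof. by rewrite subr_eq -{1}[x]addr0 (inj_eq (addrI x)) eq_sym. Qed.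

Section EBSSemiPaths.
Variables (l n : nat) (hl : (1 <= l)%N) (hn : (2 <= n)%N).
Local Notation node := (node l n).
Local Notation T := (period l n).
Local Notation blk := (blk l n).
Local Notation sft := (sft l n).
Local Notation phase := (phase l n).

Lemma period_gt0 : (0 < T)%N.
Proof. rewrite /period muln_gt0; apply/andP; split; lia. Qed.

Lemma phase_lt t : (phase t < T)%N.
Proof.
have h0 : 0 <= (t %% T%:Z)%Z by rewrite modz_ge0 // eqz_nat -lt0n period_gt0.
have h1 : (t %% T%:Z)%Z < T%:Z by rewrite ltz_pmod // ltz_nat period_gt0.
rewrite /Defs.phase; lia.
Qed.

Lemma blk_lt t : (blk t < l)%N.
Proof. by rewrite /Defs.blk ltn_divLR; [exact: phase_lt | lia]. Qed.

Lemma sft_lt t : (sft t < n)%N.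
Proof. rewrite /Defs.sft; have := ltn_pmod (phase t) (_ : 0 < n - 1)%N; lia. Qed.

Lemma eqr_natZp a b :
  (a < n)%N -> (b < n)%N -> ((a%:R : 'Z_n) == b%:R) = (a == b).
Proof.
move=> an bn; apply/eqP/eqP => [|-> //].
by move/(congr1 val); rewrite /= !Zp_nat /= Zp_cast // !modn_small.
Qed.

Lemma sft_neq0 t : (sft t)%:R != 0 :> 'Z_n.
Proof.
change ((sft t)%:R != 0%N%:R :> 'Z_n).
by rewrite eqr_natZp ?sft_lt //; lia.
Qed.

Lemma coord_ord (v : node) (q : 'I_l) : Defs.coord v q = v q.
Proof. by rewrite /Defs.coord valK. Qed.

Lemma phase_blk_sft u v : blk u = blk v -> sft u = sft v -> phase u = phase v.
Proof.
rewrite /Defs.blk /Defs.sft => eq_blk [eq_sft].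
by rewrite (divn_eq (phase u) (n - 1)) (divn_eq (phase v) (n - 1)) eq_blk eq_sft.
Qed.

Lemma phaseB_period u : phase (u - T%:Z) = phase u.
Proof. by rewrite /Defs.phase -[in RHS](subrK T%:Z u) modzDr. Qed.

Lemma phaseB_neq u m : (0 < m < T)%N -> phase (u - m%:Z) != phase u.
Proof.
move=> /andP[m_gt0 m_lt]; apply/negP => /eqP eq_phase.
have T_neq0 : T%:Z != 0 by rewrite eqz_nat -lt0n period_gt0.
have := modz_ge0 (u - m%:Z) T_neq0; have := modz_ge0 u T_neq0.
move: eq_phase; rewrite /Defs.phase => eq_phase ge0u ge0um.
have : ((u - m%:Z) %% T%:Z == u %% T%:Z)%Z by apply/eqP; lia.
by rewrite eqz_mod_dvd addrAC subrr sub0r dvdzE abszN /= gtnNdvd.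
Qed.

Lemma blk_sft_window_neq t0 k j : (j < k < T)%N ->
  ~~ ((blk (t0 - k%:Z + j%:Z) == blk t0) &&
      ((sft (t0 - k%:Z + j%:Z))%:R == (sft t0)%:R :> 'Z_n)).
Proof.
move=> /andP[jk kT]; apply/negP => /andP[/eqP eq_blk].
rewrite eqr_natZp ?sft_lt // => /eqP eq_sft.
have shift : t0 - k%:Z + j%:Z = t0 - (k - j)%N%:Z by lia.
rewrite shift in eq_blk eq_sft.
have km : (0 < k - j < T)%N by apply/andP; split; lia.
by have := phaseB_neq t0 km; rewrite (phase_blk_sft eq_blk eq_sft) eqxx.
Qed.

(* The displacement b - x left after k steps of the semi-path that starts at
   time t with displacement d. *)
Definition residual (t : int) (k : nat) (d : node) : node :=
  [ffun q : 'I_l => if has (fun j : nat => (blk (t + j%:Z) == q) &&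
       ((sft (t + j%:Z))%:R == d q)) (iota 0 k) then 0 else d q].

Lemma residual0 t d : residual t 0 d = d.
Proof. by apply/ffunP => q; rewrite ffunE. Qed.

Lemma residualS t k d q : residual t k.+1 d q =
  if (blk (t + k%:Z) == q) && (residual t k d q == (sft (t + k%:Z))%:R)
  then 0 else residual t k d q.
Proof.
have iotaS : iota 0 k.+1 = iota 0 k ++ [:: k] by rewrite -addn1 iotaD.
rewrite !ffunE iotaS has_cat /= orbF.
by case: has => /=; [case: ifP | rewrite [d q == _]eq_sym].
Qed.

Lemma residualS_eq0 t k d : residual t k d = 0 -> residual t k.+1 d = 0.
Proof. by move=> Y0; apply/ffunP => q; rewrite residualS Y0 ffunE; case: ifP. Qed.

Lemma residualS_node t k d :
  residual t k.+1 d =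
  if Defs.coord (residual t k d) (blk (t + k%:Z)) == (sft (t + k%:Z))%:R
  then residual t k d - ebasis l n (blk (t + k%:Z)) *+ sft (t + k%:Z)
  else residual t k d.
Proof.
set P := Ordinal (blk_lt (t + k%:Z)).
rewrite (_ : blk (t + k%:Z) = P) // coord_ord; apply/ffunP => q.
rewrite residualS (_ : blk (t + k%:Z) = P) //.
have [<- | qP] := eqVneq P q.
  rewrite eqxx /=; case: ifP => hit //.
  by rewrite ffunBE ffunMnE [ebasis _ _ _ _]ffunE eqxx (eqP hit) subrr.
have Pq_nat : (nat_of_ord P == q) = false by apply/negbTE.
rewrite Pq_nat /=; case: ifP => _ //.
by rewrite ffunBE ffunMnE [ebasis _ _ _ _]ffunE eq_sym Pq_nat mul0rn subr0.
Qed.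

Lemma ebs_step_residual t k d (b : node) : residual t k d != 0 ->
  ebs_step b (b - residual t k d, t + k%:Z) = (b - residual t k.+1 d, t + k.+1%:Z).
Proof.
rewrite -(subr_eq_self b) => not_at_b.
rewrite /ebs_step (negbTE not_at_b) /goes_physical not_at_b /= opprB addrC subrK.
have tS : t + k%:Z + 1 = t + k.+1%:Z by rewrite -addrA intS [1 + _]addrC.
rewrite /Defs.pi tS residualS_node.
by case: ifP => _ //; rewrite opprB addrA addrAC.
Qed.

Lemma iter_ebs_step_unfinished t a b k :
  (iter k (ebs_step b) (a, t)).1 != b ->
  iter k (ebs_step b) (a, t) = (b - residual t k (b - a), t + k%:Z).
Proof.
elim: k => [|k IH] /=; first by rewrite residual0 opprB addrC subrK addr0.
case E: (iter k _ _) => [x t'] /= not_done.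
have xb : x != b by apply: contra not_done => /eqP ->; rewrite /ebs_step eqxx.
rewrite E /= in IH; case: (IH xb) => ex ->; rewrite ex ebs_step_residual //.
by rewrite -(subr_eq_self b) -ex.
Qed.

Lemma iter_ebs_step_residual t a b k : residual t k (b - a) != 0 ->
  iter k (ebs_step b) (a, t) = (b - residual t k (b - a), t + k%:Z).
Proof.
elim: k => [|k IH] Y_neq0 /=; first by rewrite residual0 opprB addrC subrK addr0.
have Yk_neq0 : residual t k (b - a) != 0.
  by apply: contra Y_neq0 => /eqP/residualS_eq0 ->.
by rewrite IH // ebs_step_residual.
Qed.

Section TraversingEdge.
Variables (i : node) (t0 : int).
Let P0 := Ordinal (blk_lt t0).
Let s0 := (sft t0)%:R : 'Z_n.

Definition edge_source (k : nat) (d : node) : int * node * node :=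
  (t0 - k%:Z, i + residual (t0 - k%:Z) k d - d, i + residual (t0 - k%:Z) k d).

Lemma residual_edge_blk k (d : node) : (k < T)%N -> d P0 = s0 ->
  residual (t0 - k%:Z) k d P0 = s0.
Proof.
move=> kT dP0; rewrite ffunE; case: hasP => [[j]|//].
rewrite mem_iota add0n => jk /=; rewrite dP0.
by rewrite (negbTE (blk_sft_window_neq _ _)) //; apply/andP.
Qed.

Lemma traverses_edge_source k (d : node) : (k < T)%N -> d P0 = s0 ->
  let x := edge_source k d in traverses x.1.1 x.1.2 x.2 i t0.
Proof.
move=> kT dP0 /=; set Y := residual _ k d.
have YP0 : Y P0 = s0 by exact: residual_edge_blk.
have Y_neq0 : Y != 0.
  by apply: contraNneq (sft_neq0 t0) => Y0; rewrite -/s0 -YP0 Y0 ffunE.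
have dE : i + Y - (i + Y - d) = d by rewrite opprB addrC subrK.
exists k; rewrite iter_ebs_step_residual dE //; split; first by rewrite addrK subrK.
rewrite /goes_physical /= [i + Y]addrC addrK -{1}[i]add0r (inj_eq (addIr i)).
by rewrite eq_sym Y_neq0 (_ : blk t0 = P0) // coord_ord YP0 /=.
Qed.

Lemma edge_source_traverses t a b : traverses t a b i t0 ->
  exists k (d : node), [/\ (k < T)%N, d P0 = s0 & (t, a, b) = edge_source k d].
Proof.
move=> [k [hit phys]].
have := @iter_ebs_step_unfinished t a b k; rewrite hit.
case/andP: (phys) => -> _ /(_ isT) [ei et].
set d := b - a in ei; set Y := residual t k d in ei.
have bi : b - i = Y by rewrite ei opprB addrC subrK.
move: phys; rewrite /goes_physical /= bi (_ : blk t0 = P0) // coord_ord.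
case/andP=> _ /eqP YP0.
have tk : t = t0 - k%:Z by rewrite et addrK.
move: YP0; rewrite /Y ffunE; case: ifPn => [_ Y0 | no_hit YP0].
  by move: (sft_neq0 t0); rewrite -Y0 eqxx.
have kT : (k < T)%N.
  rewrite ltnNge; apply/negP => Tk; move/negP: no_hit; apply.
  apply/hasP; exists (k - T)%N; first by rewrite mem_iota; have := period_gt0; lia.
  have -> : t + (k - T)%N%:Z = t0 - T%:Z by rewrite tk; lia.
  by rewrite /Defs.blk /Defs.sft phaseB_period YP0 !eqxx.
exists k, d; split => //; rewrite /edge_source -tk -/Y.
by rewrite ei subrK /d opprB addrC subrK.
Qed.

Lemma edge_source_inj k (d : node) k' (d' : node) :
  edge_source k d = edge_source k' d' -> (k, d) = (k', d').
Proof.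
case=> tk ea eb; have kk : k = k' by lia.
by subst k'; move: ea; rewrite eb => /addrI/oppr_inj ->.
Qed.

End TraversingEdge.
End EBSSemiPaths.

Theorem mainTheorem5 (l n : nat) (hl : (1 <= l)%N) (hn : (2 <= n)%N)
    (i : node l n) (t0 : int) :
  exists s : seq (int * node l n * node l n),
    uniq s /\
    (forall x : int * node l n * node l n,
        x \in s <-> traverses x.1.1 x.1.2 x.2 i t0) /\
    size s = (period l n * n ^ (l - 1))%N.
Proof.
set P0 := Ordinal (blk_lt hl hn t0).
pose D := [pred d : node l n | d P0 == (sft l n t0)%:R].
exists [seq edge_source i t0 k d | k <- iota 0 (period l n), d <- enum D].
split; [|split].
- apply: allpairs_uniq; [exact: iota_uniq | exact: enum_uniq |].
  move=> [k d] [k' d'] _ _ /=; exact: edge_source_inj.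
- move=> x; split.
  + case/allpairsP=> [[k d] [/=]]; rewrite mem_iota mem_enum => kT /eqP dP0 ->.
    exact: traverses_edge_source.
  + case: x => [[t a] b] /= /edge_source_traverses [k [d [kT dP0 ->]]].
    by apply: allpairs_f; rewrite ?mem_iota ?mem_enum ?inE ?dP0.
- rewrite size_allpairs size_iota -cardE card_ffun_fixed card_ord.
  by rewrite card_ord Zp_cast // subn1.
Qed.
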